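(* Let $\Lambda$ be a finite simple graph with vertex set $\{v_1,\dots,v_n\}$, $n\ge 3$, and let $\Gamma'=\Gamma'(\Lambda)$ be the graph constructed as follows. The vertex set of $\Gamma'$ is $\{v_1,\dots,v_n\}\cup\{a_1,a_2,a_3,b_1,b_2,b_3,c_1,\dots,c_n,d_1,d_2,d_3\}$ (all new vertices distinct). The edges of $\Gamma'$ are: all edges of $\Lambda$; $\{c_j,v_j\}$ and $\{c_j,v_{j+1}\}$ for $1\le j\le n$, where $v_{n+1}:=v_1$; $\{d_i,c_j\}$ for all $i\in\{1,2,3\}$ and $1\le j\le n$; $\{d_1,v_1\}$, $\{d_1,b_1\}$; $\{d_2,v_2\}$; $\{d_3,v_k\}$ for $3\le k\le n$, and $\{d_3,b_3\}$; $\{d_2,d_3\}$; $\{v_k,b_i\}$ for all $1\le k\le n$ and $i\in\{1,2,3\}$; $\{b_1,a_1\}$, $\{b_2,a_2\}$, $\{b_3,a_3\}$; and $\{a_1,a_2\}$, $\{a_1,a_3\}$, $\{a_2,a_3\}$. There are no other edges. Then the only graph automorphism of $\Gamma'$ is the identity.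
   Context: All graphs are finite, undirected, without loops or multiple edges. A graph automorphism is a bijection of the vertex set preserving adjacency and non-adjacency. *)

From HB Require Import structures.
From mathcomp Require Import all_boot.
Set Implicit Arguments. Unset Strict Implicit. Unset Printing Implicit Defensive.

(* Vertices of Gamma'(Lambda), 0-based indices:
   GV i  = v_{i+1}  (i : 'I_n),   GC j = c_{j+1} (j : 'I_n),
   GA i  = a_{i+1}, GB i = b_{i+1}, GD i = d_{i+1}  (i : 'I_3). *)
Inductive gvert (n : nat) : Type :=
| GV of 'I_n | GA of 'I_3 | GB of 'I_3 | GC of 'I_n | GD of 'I_3.
Arguments GV {n}. Arguments GA {n}. Arguments GB {n}. Arguments GC {n}. Arguments GD {n}.

Definition gvert_enc n (x : gvert n) : 'I_n + 'I_3 + 'I_3 + 'I_n + 'I_3 :=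
  match x with
  | GV i => inl (inl (inl (inl i)))
  | GA i => inl (inl (inl (inr i)))
  | GB i => inl (inl (inr i))
  | GC i => inl (inr i)
  | GD i => inr i
  end.
Definition gvert_dec n (s : 'I_n + 'I_3 + 'I_3 + 'I_n + 'I_3) : gvert n :=
  match s with
  | inl (inl (inl (inl i))) => GV i
  | inl (inl (inl (inr i))) => GA i
  | inl (inl (inr i)) => GB i
  | inl (inr i) => GC i
  | inr i => GD i
  end.
Lemma gvert_encK n : cancel (@gvert_enc n) (@gvert_dec n).
Proof. by case. Qed.
HB.instance Definition _ n := Finite.copy (gvert n) (can_type (@gvert_encK n)).

(* Directed "generating" edges of Gamma'; [gadj] is their symmetrization.
   [e] is the edge relation of Lambda on {v_1..v_n}. *)
Definition gadj0 n (e : rel 'I_n) (x y : gvert n) : bool :=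
  match x, y with
  | GV i, GV j => e i j
  | GC j, GV k => (val k == val j) || (val k == (val j).+1 %% n)
                                        (* c_j v_j, c_j v_{j+1}, v_{n+1}=v_1 *)
  | GD _, GC _ => true
  | GD i, GV k => [|| (val i == 0) && (val k == 0),
                      (val i == 1) && (val k == 1)
                    | (val i == 2) && (2 <= val k)]       (* d_3 v_k, k>=3 *)
  | GD i, GB j => ((val i == 0) && (val j == 0))
                  || ((val i == 2) && (val j == 2))
  | GD i, GD j => (val i == 1) && (val j == 2)
  | GV _, GB _ => true
  | GB i, GA j => i == j
  | GA i, GA j => val i < val j                           (* triangle a1a2a3 *)
  | _, _ => false
  end.

Definition gadj n (e : rel 'I_n) : rel (gvert n) :=
  fun x y => gadj0 e x y || gadj0 e y x.

Definition is_graph_aut (T : finType) (r : rel T) (f : T -> T) : Prop :=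
  bijective f /\ forall x y, r (f x) (f y) = r x y.

From mathcomp Require Import all_boot.
Set Implicit Arguments. Unset Strict Implicit. Unset Printing Implicit Defensive.

(* Every vertex class of Gamma' is defined by adjacency alone: the a_i are the
   vertices of degree at most 3, the b_i the other neighbours of the a_i, the
   v_k the vertices adjacent to all b_i, d_1 and d_3 the remaining neighbours
   of the b_i, the c_j the remaining vertices adjacent to both d_1 and d_3, and
   d_2 is what is left.  An automorphism therefore preserves every class and
   fixes d_2; then d_3 (adjacent to d_2), d_1, b_1 and b_3 (adjacent to d_1,
   d_3), b_2, the a_i (adjacent to b_i), v_1 and v_2 (the v-neighbours of d_1,
   d_2) and c_1 (the c adjacent to v_1 and v_2) are each the only vertex of an
   invariant class.  Going around the cycle v_1 c_1 v_2 c_2 ... v_n c_n, each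
   vertex is then the only neighbour of its predecessor in its class other
   than the vertex before it. *)

Lemma fixed_if_unique (T : Type) (f : T -> T) (P : pred T) x :
  {mono f : y / P y} -> P x -> (forall y, P y -> y = x) -> f x = x.
Proof. by move=> fP Px uniqP; apply: uniqP; rewrite fP. Qed.

Lemma card_le_size (T : finType) (A : pred T) (s : seq T) :
  (forall y, A y -> y \in s) -> #|A| <= size s.
Proof.
by move=> sAs; apply: leq_trans (card_size s); apply/subset_leq_card/subsetP.
Qed.

Lemma size_le_card (T : finType) (A : pred T) (s : seq T) :
  uniq s -> all A s -> size s <= #|A|.
Proof.
move=> s_uniq /allP sA; rewrite cardE; apply: uniq_leq_size => // y /sA.
by rewrite mem_enum.
Qed.

Lemma ordS_neq n (k : 'I_n.+2) : ordS k != k.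
Proof.
rewrite -val_eqE /=; have := ltn_ord k; rewrite ltnS leq_eqVlt => /orP[/eqP-> | lt_k].
  by rewrite modnn.
by rewrite modn_small // gtn_eqF.
Qed.

Lemma ordS_ind n (P : 'I_n.+1 -> Prop) :
  P ord0 -> (forall k, P k -> P (ordS k)) -> forall k, P k.
Proof.
move=> P0 PS k.
have iter_ordS j : val (iter j (@ordS n.+1) ord0) = j %% n.+1.
  by elim: j => [|j IHj] //=; rewrite IHj -addn1 modnDml addn1.
have -> : k = iter k (@ordS n.+1) ord0 by apply: val_inj; rewrite iter_ordS modn_small.
by elim: (val k) => //= j; apply: PS.
Qed.

Section GraphAutomorphism.
Variables (T : finType) (r : rel T) (f : T -> T).
Hypothesis f_aut : is_graph_aut r f.

Let f_bij : bijective f := f_aut.1.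
Let f_adj : forall x y, r (f x) (f y) = r x y := f_aut.2.

Lemma card_nbr_aut x : #|r (f x)| = #|r x|.
Proof.
have [g _ gK] := f_bij.
rewrite -(card_image (bij_inj f_bij) (r x)); apply: eq_card => y.
by rewrite -[y]gK mem_image; [exact: f_adj | apply: bij_inj].
Qed.

Lemma exists_nbr_mono (P : pred T) :
  {mono f : x / P x} -> {mono f : x / [exists y, P y && r x y]}.
Proof.
have [g _ gK] := f_bij.
move=> fP x; apply/existsP/existsP => -[y Py].
  by exists (g y); rewrite -fP -f_adj gK.
by exists (f y); rewrite fP f_adj.
Qed.

Lemma forall_nbr_mono (P : pred T) :
  {mono f : x / P x} -> {mono f : x / [forall y, P y ==> r x y]}.
Proof.
have [g _ gK] := f_bij.
move=> fP x; apply/forallP/forallP => Px y.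
  by rewrite -fP -f_adj; apply: Px.
by rewrite -[y]gK fP f_adj; apply: Px.
Qed.

Lemma adj_fixed_mono z : f z = z -> {mono f : x / r x z}.
Proof. by move=> fz x; rewrite -{1}fz f_adj. Qed.

Lemma neq_fixed_mono z : f z = z -> {mono f : x / x != z}.
Proof. by move=> fz x; rewrite -{1}fz (inj_eq (bij_inj f_bij)). Qed.

End GraphAutomorphism.

Section GammaPrime.
Variables (m : nat) (e : rel 'I_m.+3).
Local Notation n := m.+3.
Local Notation adj := (gadj e).

Definition i0 : 'I_3 := ord0.
Definition i1 : 'I_3 := @Ordinal 3 1 isT.
Definition i2 : 'I_3 := @Ordinal 3 2 isT.
Definition k0 : 'I_n := ord0.
Definition k1 : 'I_n := @Ordinal n 1 isT.
Definition k2 : 'I_n := @Ordinal n 2 isT.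

Lemma ord3P (P : 'I_3 -> Prop) : P i0 -> P i1 -> P i2 -> forall i, P i.
Proof.
move=> P0 P1 P2 [[|[|[|//]]] lt_i3].
- by rewrite (_ : Ordinal _ = i0) //; apply: val_inj.
- by rewrite (_ : Ordinal _ = i1) //; apply: val_inj.
- by rewrite (_ : Ordinal _ = i2) //; apply: val_inj.
Qed.

Lemma adj_sym : symmetric adj.
Proof. by move=> x y; rewrite /gadj orbC. Qed.

Lemma adjCV j k : adj (GC j) (GV k) = (k == j) || (k == ordS j).
Proof. by rewrite /gadj /= orbF. Qed.

Definition isA x := #|adj x| <= 3.
Definition isB x := ~~ isA x && [exists y, isA y && adj x y].
Definition isV x := [forall y, isB y ==> adj x y].
Definition isCD x := ~~ [|| isA x, isB x | isV x].
Definition isD13 x := isCD x && [exists y, isB y && adj x y].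
Definition isC x := isCD x && ~~ isD13 x && [forall y, isD13 y ==> adj x y].
Definition isD2 x := isCD x && ~~ isD13 x && ~~ isC x.

Lemma isAE x : isA x = (if x is GA _ then true else false).
Proof.
rewrite /isA; case: x => i.
- apply/negbTE; rewrite -ltnNge.
  apply: (size_le_card (s := [:: GB i0; GB i1; GB i2; GC i])) => //.
  by rewrite /= /gadj /= eqxx.
- apply: (card_le_size (s := [:: GB i; GA (ordS i); GA (ordS (ordS i))])).
  by move: i; apply: ord3P; case=> j //; move: j; apply: ord3P.
- apply/negbTE; rewrite -ltnNge.
  apply: (size_le_card (s := [:: GV k0; GV k1; GV k2; GA i])) => //.
  by rewrite /= /gadj /= eqxx.
- apply/negbTE; rewrite -ltnNge.
  apply: (size_le_card (s := [:: GD i0; GD i1; GD i2; GV i])) => //.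
  by rewrite /= /gadj /= eqxx.
- apply/negbTE; rewrite -ltnNge; move: i; apply: ord3P.
  + by apply: (size_le_card (s := [:: GC k0; GC k1; GC k2; GV k0])).
  + by apply: (size_le_card (s := [:: GC k0; GC k1; GC k2; GV k1])).
  + by apply: (size_le_card (s := [:: GC k0; GC k1; GC k2; GD i1])).
Qed.

Lemma isBE x : isB x = (if x is GB _ then true else false).
Proof.
rewrite /isB isAE; case: x => i //=.
- by apply/existsP => -[[] j]; rewrite isAE.
- by apply/existsP; exists (GA i); rewrite isAE /gadj /= eqxx.
- by apply/existsP => -[[] j]; rewrite isAE.
- by apply/existsP => -[[] j]; rewrite isAE.
Qed.

Lemma isVE x : isV x = (if x is GV _ then true else false).
Proof.
rewrite /isV; case: x => i.
- by apply/forallP => -[] j; rewrite isBE.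
- by apply/forallP => /(_ (GB (ordS i))); rewrite isBE /gadj /=; move: i; apply: ord3P.
- by apply/forallP => /(_ (GB i)); rewrite isBE /gadj /=.
- by apply/forallP => /(_ (GB i0)); rewrite isBE /gadj /=.
- by apply/forallP => /(_ (GB i1)); rewrite isBE /gadj /=; move: i; apply: ord3P.
Qed.

Lemma isCDE x : isCD x = (match x with GC _ | GD _ => true | _ => false end).
Proof. by rewrite /isCD isAE isBE isVE; case: x. Qed.

Lemma isD13E x : isD13 x = (if x is GD i then i != i1 else false).
Proof.
rewrite /isD13 isCDE; case: x => i //=.
- by apply/existsP => -[[] j]; rewrite isBE.
- move: i; apply: ord3P.
  + by apply/existsP; exists (GB i0); rewrite isBE.
  + by apply/existsP => -[[] j]; rewrite isBE //= /gadj /=.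
  + by apply/existsP; exists (GB i2); rewrite isBE.
Qed.

Lemma isCE x : isC x = (if x is GC _ then true else false).
Proof.
rewrite /isC isD13E isCDE; case: x => i //=.
- by apply/forallP => -[] j; rewrite isD13E /= ?/gadj /= ?implybT.
- move: i; apply: ord3P => //=.
  by apply/forallP => /(_ (GD i0)); rewrite isD13E /gadj.
Qed.

Lemma isD2E x : isD2 x = (if x is GD i then i == i1 else false).
Proof. by rewrite /isD2 isCE isD13E isCDE; case: x => i //=; rewrite negbK andbT. Qed.

Section Automorphism.
Variable f : gvert n -> gvert n.
Hypothesis f_aut : is_graph_aut adj f.

Lemma isA_mono : {mono f : x / isA x}.
Proof. by move=> x; rewrite /isA card_nbr_aut. Qed.

Lemma isB_mono : {mono f : x / isB x}.
Proof. by move=> x; rewrite /isB isA_mono (exists_nbr_mono f_aut isA_mono). Qed.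

Lemma isV_mono : {mono f : x / isV x}.
Proof. by move=> x; rewrite /isV (forall_nbr_mono f_aut isB_mono). Qed.

Lemma isCD_mono : {mono f : x / isCD x}.
Proof. by move=> x; rewrite /isCD isA_mono isB_mono isV_mono. Qed.

Lemma isD13_mono : {mono f : x / isD13 x}.
Proof. by move=> x; rewrite /isD13 isCD_mono (exists_nbr_mono f_aut isB_mono). Qed.

Lemma isC_mono : {mono f : x / isC x}.
Proof.
by move=> x; rewrite /isC isCD_mono isD13_mono (forall_nbr_mono f_aut isD13_mono).
Qed.

Lemma isD2_mono : {mono f : x / isD2 x}.
Proof. by move=> x; rewrite /isD2 isCD_mono isD13_mono isC_mono. Qed.

Lemma f_GD1 : f (GD i1) = GD i1.
Proof.
apply: (fixed_if_unique isD2_mono); first by rewrite isD2E.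
by case=> i; rewrite isD2E // => /eqP->.
Qed.

Lemma f_GD2 : f (GD i2) = GD i2.
Proof.
apply: (fixed_if_unique (P := fun y => isD13 y && adj y (GD i1)) _).
- by move=> y; rewrite isD13_mono (adj_fixed_mono f_aut f_GD1).
- by rewrite isD13E.
- by case=> i; rewrite isD13E //; move: i; apply: ord3P.
Qed.

Lemma f_GD0 : f (GD i0) = GD i0.
Proof.
apply: (fixed_if_unique (P := fun y => isD13 y && ~~ adj y (GD i1)) _).
- by move=> y; rewrite isD13_mono (adj_fixed_mono f_aut f_GD1).
- by rewrite isD13E.
- by case=> i; rewrite isD13E //; move: i; apply: ord3P.
Qed.

Lemma f_GD i : f (GD i) = GD i.
Proof. by move: i; apply: ord3P; [exact: f_GD0 | exact: f_GD1 | exact: f_GD2]. Qed.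

Lemma f_GB0 : f (GB i0) = GB i0.
Proof.
apply: (fixed_if_unique (P := fun y => isB y && adj y (GD i0)) _).
- by move=> y; rewrite isB_mono (adj_fixed_mono f_aut (f_GD i0)).
- by rewrite isBE.
- by case=> i; rewrite isBE //; move: i; apply: ord3P.
Qed.

Lemma f_GB2 : f (GB i2) = GB i2.
Proof.
apply: (fixed_if_unique (P := fun y => isB y && adj y (GD i2)) _).
- by move=> y; rewrite isB_mono (adj_fixed_mono f_aut (f_GD i2)).
- by rewrite isBE.
- by case=> i; rewrite isBE //; move: i; apply: ord3P.
Qed.

Lemma f_GB1 : f (GB i1) = GB i1.
Proof.
apply: (fixed_if_unique
  (P := fun y => [&& isB y, ~~ adj y (GD i0) & ~~ adj y (GD i2)]) _).
- by move=> y; rewrite isB_mono !(adj_fixed_mono f_aut (f_GD _)).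
- by rewrite isBE.
- by case=> i; rewrite isBE //; move: i; apply: ord3P.
Qed.

Lemma f_GB i : f (GB i) = GB i.
Proof. by move: i; apply: ord3P; [exact: f_GB0 | exact: f_GB1 | exact: f_GB2]. Qed.

Lemma f_GA i : f (GA i) = GA i.
Proof.
apply: (fixed_if_unique (P := fun y => isA y && adj y (GB i)) _).
- by move=> y; rewrite isA_mono (adj_fixed_mono f_aut (f_GB i)).
- by rewrite isAE /gadj /= eqxx.
- by case=> j; rewrite isAE //= /gadj /= => /eqP->.
Qed.

Lemma f_GV0 : f (GV k0) = GV k0.
Proof.
apply: (fixed_if_unique (P := fun y => isV y && adj y (GD i0)) _).
- by move=> y; rewrite isV_mono (adj_fixed_mono f_aut (f_GD i0)).
- by rewrite isVE.
- by case=> k; rewrite isVE //= /gadj /= orbF => /eqP k0E; congr GV; apply: val_inj.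
Qed.

Lemma f_GV1 : f (GV k1) = GV k1.
Proof.
apply: (fixed_if_unique (P := fun y => isV y && adj y (GD i1)) _).
- by move=> y; rewrite isV_mono (adj_fixed_mono f_aut (f_GD i1)).
- by rewrite isVE.
- by case=> k; rewrite isVE //= /gadj /= orbF => /eqP k1E; congr GV; apply: val_inj.
Qed.

Lemma f_GC0 : f (GC k0) = GC k0.
Proof.
apply: (fixed_if_unique
  (P := fun y => [&& isC y, adj y (GV k0) & adj y (GV k1)]) _).
- move=> y.
  by rewrite isC_mono (adj_fixed_mono f_aut f_GV0) (adj_fixed_mono f_aut f_GV1).
- by rewrite isCE !adjCV eqxx.
- case=> j; rewrite isCE //= !adjCV.
  (* c_n is adjacent to v_1 but, as n >= 3, not to v_2 *)
  case: (eqVneq k0 j) => [<- //|_] /= /andP[/eqP k0S].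
  by rewrite -(inj_eq (@ordS_inj _)) -!k0S.
Qed.

Lemma f_GV_GC_ordS k : f (GV k) = GV k -> f (GC k) = GC k ->
  f (GV (ordS k)) = GV (ordS k) /\ f (GC (ordS k)) = GC (ordS k).
Proof.
move=> fV fC.
have fVS : f (GV (ordS k)) = GV (ordS k).
  apply: (fixed_if_unique
    (P := fun y => [&& isV y, adj y (GC k) & y != GV k]) _).
  - by move=> y; rewrite isV_mono (adj_fixed_mono f_aut fC) (neq_fixed_mono f_aut fV).
  - by rewrite /= isVE adj_sym adjCV eqxx orbT; exact: ordS_neq.
  - case=> l /=; rewrite isVE //= adj_sym adjCV.
    by case: eqP => [->|_]; [rewrite eqxx andbF | case/andP=> /eqP->].
split=> //; apply: (fixed_if_unique
  (P := fun y => [&& isC y, adj y (GV (ordS k)) & y != GC k]) _).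
- by move=> y; rewrite isC_mono (adj_fixed_mono f_aut fVS) (neq_fixed_mono f_aut fC).
- by rewrite /= isCE adjCV eqxx; exact: ordS_neq.
- case=> l /=; rewrite isCE //= adjCV (inj_eq (@ordS_inj _)).
  by case: eqP => [<- //|_] /=; case: eqP => [->|//]; rewrite eqxx.
Qed.

Lemma f_GV_GC k : f (GV k) = GV k /\ f (GC k) = GC k.
Proof.
elim/ordS_ind: k => [|k [fV fC]]; last exact: f_GV_GC_ordS.
by split; [exact: f_GV0 | exact: f_GC0].
Qed.

Lemma aut_id x : f x = x.
Proof.
by case: x => i; [exact: (f_GV_GC i).1 | exact: f_GA | exact: f_GB
                  | exact: (f_GV_GC i).2 | exact: f_GD].
Qed.

End Automorphism.

End GammaPrime.

Theorem lemma3p8 (n : nat) (e : rel 'I_n) :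
  3 <= n -> irreflexive e -> symmetric e ->
  forall f : gvert n -> gvert n, is_graph_aut (gadj e) f -> forall x, f x = x.
Proof.
(* [gadj] is symmetric by construction and no step depends on the edges of Lambda. *)
case: n e => [|[|[|m]]] e // _ _ _ f f_aut.
exact: aut_id f_aut.
Qed.
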